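(* There exists a Stackelberg game $(G,L,F)$ that admits no SCE-PAPE, i.e. $\mathbf{X}^{SCE\text{-}PAPE}=\emptyset$.
   Context: A finite game is $G=(N,\{S_p\}_{p\in N},\{u_p\}_{p\in N})$ with players $N=\{1,\dots,n\}$, finite nonempty strategy sets $S_p$, and utilities $u_p:S\to\mathbb{R}$ on $S=\prod_{p\in N}S_p$; write $s=(s_p,s_{-p})$ with $s_{-p}\in S_{-p}=\prod_{q\neq p}S_q$. $\mathcal{X}=\Delta(S)$ is the set of probability distributions on $S$ and $u_p(x)=\sum_{s\in S}x(s)u_p(s)$ for $x\in\mathcal{X}$. For $P\subseteq N$, $\mathcal{X}^{CE}_P$ is the set of $x\in\mathcal{X}$ such that for every $p\in P$ and all $s_p\neq s_p'\in S_p$: $\sum_{s_{-p}\in S_{-p}} x(s_p,s_{-p})\,(u_p(s_p,s_{-p})-u_p(s_p',s_{-p}))\ge 0$; $\mathcal{X}^{CE}=\mathcal{X}^{CE}_N$ is the set of correlated equilibria of $G$. A Stackelberg game (SG) is a triple $(G,L,F)$ with $L\cup F=N$ and $L\cap F=\emptyset$ (leaders and followers). For $P\subseteq N$, $\Pi_P$ is the set of ordered subsets of $P$ (finite sequences of pairwise distinct elements of $P$, including the empty sequence $\varnothing$); for $\pi\in\Pi_P$ and $p\in P$ not occurring in $\pi$, $\pi p$ is $\pi$ with $p$ appended; when used as a set, $\pi$ means its set of entries. $\mathbf{X}=\prod_{\pi\in\Pi_L}\mathcal{X}^{CE}_{\pi\cup F}$, with elements $\mathbf{x}=[x_\pi]_{\pi\in\Pi_L}$.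 For $\mathbf{x}\in\mathbf{X}$ and $\pi\in\Pi_L$, $x_\pi$ is stable if $u_p(x_\pi)\ge u_p(x_{\pi p})$ for all $p\in L\setminus\pi$; $\mathbf{x}$ is stable if $x_\varnothing$ is stable, and perfectly stable if $x_\pi$ is stable for every $\pi\in\Pi_L$; $\mathbf{X}^{S}$ and $\mathbf{X}^{PS}$ denote the sets of stable and perfectly stable elements of $\mathbf{X}$. For $\mathbf{X}'\subseteq\mathbf{X}$ and $\pi\in\Pi_L$, $\mathcal{P}_{L\setminus\pi}(\mathbf{X}')$ is the set of Pareto optimal elements of $\{x'_\pi:\mathbf{x}'\in\mathbf{X}'\}$ with respect to the objectives $u_p$, $p\in L\setminus\pi$ (an element $y$ of the set is Pareto optimal if no $y'$ in the set satisfies $u_p(y')\ge u_p(y)$ for all $p\in L\setminus\pi$ with strict inequality for some such $p$). $\mathbf{x}\in\mathbf{X}$ is an SCE-PAPE if $\mathbf{x}\in\mathbf{X}^{PS}$ and $x_\pi\in\mathcal{P}_{L\setminus\pi}(\mathbf{X}^{PS})$ for every $\pi\in\Pi_L$; $\mathbf{X}^{SCE\text{-}PAPE}$ is the set of SCE-PAPEs. *)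

From HB Require Import structures.
From mathcomp Require Import all_boot all_order all_algebra.
Set Implicit Arguments. Unset Strict Implicit. Unset Printing Implicit Defensive.
Import Order.TTheory GRing.Theory Num.Theory.
Local Open Scope ring_scope.

(* Players N = 'I_n; player p has strategy set S_p = 'I_(m p) (nonempty iff 0 < m p).
   Strategy profiles S = prod_p S_p. *)
Notation prof m := {dffun forall p, 'I_(m p)}.

Definition dev (n : nat) (m : 'I_n -> nat) (s : {dffun forall q : 'I_n, 'I_(m q)}) (p : 'I_n) (b : 'I_(m p))
  : {dffun forall q : 'I_n, 'I_(m q)} := finfun (dfwith (fun q : 'I_n => s q) b).
Arguments dev {n m} s p b.

Section Game.
Variables (R : realFieldType) (n : nat) (m : 'I_n -> nat)
  (u : 'I_n -> prof m -> R) (L : {set 'I_n}).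

Definition is_dist (x : {ffun prof m -> R}) : Prop :=
  (forall s, 0 <= x s) /\ \sum_(s : prof m) x s = 1.

Definition eu (p : 'I_n) (x : {ffun prof m -> R}) : R :=
  \sum_(s : prof m) x s * u p s.

(* x in X^CE_P (given x in Delta(S)) : the sum over s with s_p = a is the sum
   over s_{-p} in S_{-p} of x(a, s_{-p}) (u_p(a,s_{-p}) - u_p(b,s_{-p})) *)
Definition CE_P (P : {set 'I_n}) (x : {ffun prof m -> R}) : Prop :=
  is_dist x /\
  forall p, p \in P -> forall a b : 'I_(m p), a != b ->
    0 <= \sum_(s : prof m | s p == a) x s * (u p s - u p (dev s p b)).

Definition ordsub (pi : seq 'I_n) : bool := uniq pi && all (fun p => p \in L) pi.

Definition piF (pi : seq 'I_n) : {set 'I_n} :=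
  [set p | (p \in pi) || (p \notin L)].

(* An element of X = prod_{pi in Pi_L} X^CE_{pi u F} is represented by a function
   on sequences; only its values on ordered subsets of L matter. *)
Definition inX (x : seq 'I_n -> {ffun prof m -> R}) : Prop :=
  forall pi, ordsub pi -> CE_P (piF pi) (x pi).

Definition stable_at (x : seq 'I_n -> {ffun prof m -> R}) (pi : seq 'I_n) : Prop :=
  forall p, p \in L -> p \notin pi -> eu p (x (rcons pi p)) <= eu p (x pi).

Definition stable (x : seq 'I_n -> {ffun prof m -> R}) : Prop :=
  inX x /\ stable_at x [::].

Definition perfectly_stable (x : seq 'I_n -> {ffun prof m -> R}) : Prop :=
  inX x /\ forall pi, ordsub pi -> stable_at x pi.

Definition pareto (X' : (seq 'I_n -> {ffun prof m -> R}) -> Prop) (pi : seq 'I_n)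
  (y : {ffun prof m -> R}) : Prop :=
  (exists2 x', X' x' & x' pi = y) /\
  ~ (exists x', [/\ X' x',
       (forall p, p \in L -> p \notin pi -> eu p y <= eu p (x' pi)) &
       (exists p, [/\ p \in L, p \notin pi & eu p y < eu p (x' pi)])]).

Definition SCE_PAPE (x : seq 'I_n -> {ffun prof m -> R}) : Prop :=
  perfectly_stable x /\ forall pi, ordsub pi -> pareto perfectly_stable pi (x pi).

End Game.

From HB Require Import structures.
From mathcomp Require Import all_boot all_order all_algebra.
From mathcomp Require Import lra.
Import Order.TTheory GRing.Theory Num.Theory.
Local Open Scope ring_scope.
Set Implicit Arguments. Unset Strict Implicit. Unset Printing Implicit Defensive.

(* Three players with strategies {0, 1}; players 0 and 1 are leaders, player 2
   is the follower.  The follower makes the profile (0,1,1), which both leaders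
   like, impossible in every correlated equilibrium.  If leader 0 commits first,
   Pareto optimality for leader 1 forces the outcome (0,0,1), worth 2 to leader
   0; symmetrically, if leader 1 commits first the outcome is (1,1,1), worth 2
   to leader 1.  Stability of the root then asks for a correlated equilibrium
   giving at least 2 to both leaders, which does not exist. *)

Section PointMasses.
Variables (R : realFieldType) (n : nat) (m : 'I_n -> nat)
  (u : 'I_n -> prof m -> R).

Definition point_mass (s0 : prof m) : {ffun prof m -> R} :=
  [ffun s => (s == s0)%:R].

Lemma sum_point_mass (F : prof m -> R) (s0 : prof m) :
  \sum_s point_mass s0 s * F s = F s0.
Proof.
rewrite (bigD1 s0) //= big1 ?ffunE ?eqxx ?mul1r ?addr0 // => s /negPf s_neq.
by rewrite ffunE s_neq mul0r.
Qed.

Lemma eu_point_mass (p : 'I_n) (s0 : prof m) : eu u p (point_mass s0) = u p s0.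
Proof. exact: sum_point_mass. Qed.

Lemma CE_point_mass (P : {set 'I_n}) (s0 : prof m) :
  (forall p, p \in P -> forall b : 'I_(m p), u p (dev s0 p b) <= u p s0) ->
  CE_P u P (point_mass s0).
Proof.
move=> no_gain; split; first split.
- by move=> s; rewrite ffunE ler0n.
- by rewrite -[RHS](sum_point_mass (fun=> 1) s0); apply: eq_bigr => s _; rewrite mulr1.
move=> p pP a b _; rewrite big_mkcond (bigD1 s0) //= big1 => [|s /negPf s_neq].
  rewrite ffunE eqxx mul1r addr0; case: ifP => // _.
  by rewrite subr_ge0 no_gain.
by rewrite ffunE s_neq mul0r; case: ifP.
Qed.

Section TwoStage.
Variable L : {set 'I_n}.

Definition two_stage (a : 'I_n) (s1 s0 : prof m) (pi : seq 'I_n) :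
  {ffun prof m -> R} :=
  if (pi == [::]) || (pi == [:: a]) then point_mass s1 else point_mass s0.

(* If s0 is a pure Nash equilibrium that no leader prefers to s1, and s1 is an
   equilibrium for the players active at the root and after a, the two-stage
   family is perfectly stable: deviating leaders only ever reach s0. *)
Lemma two_stage_perfectly_stable (a : 'I_n) (s1 s0 : prof m) :
  CE_P u (piF L [::]) (point_mass s1) ->
  CE_P u (piF L [:: a]) (point_mass s1) ->
  CE_P u setT (point_mass s0) ->
  (forall p, p \in L -> u p s0 <= u p s1) ->
  perfectly_stable u L (two_stage a s1 s0).
Proof.
move=> CE_root CE_a [dist0 CE0] s0_worse; split.
  move=> pi _; rewrite /two_stage.
  case: eqP => [-> //|_]; case: eqP => [-> //|_].
  by split=> // p _; apply: CE0.
move=> pi _ p pL p_notin.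
rewrite /stable_at /two_stage !(fun_if (eu u p)) !eu_point_mass.
case: pi p_notin => [|q pi] p_notin /=; rewrite ?eqseq_cons ?andbT.
  by case: ifP => _; [exact: lexx | exact: s0_worse].
have -> : (rcons pi p == [::]) = false by case: pi {p_notin}.
by rewrite andbF /=; case: ifP => _; [exact: s0_worse | exact: lexx].
Qed.

End TwoStage.

Lemma pareto_lower_bound (L : {set 'I_n}) (X' : (seq 'I_n -> {ffun prof m -> R}) -> Prop)
    (pi : seq 'I_n) (y : {ffun prof m -> R}) (q : 'I_n) x' :
  pareto u L X' pi y -> X' x' -> q \in L -> q \notin pi ->
  (forall p, p \in L -> p \notin pi -> p = q) ->
  eu u q (x' pi) <= eu u q y.
Proof.
move=> [_ optimal] X'x' qL q_notin only_q; rewrite leNgt; apply/negP => better.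
apply: optimal; exists x'; split => //.
  by move=> p pL p_notin; rewrite (only_q p pL p_notin) ltW.
by exists q.
Qed.

End PointMasses.

Definition two_strats : 'I_3 -> nat := fun _ => 2%N.
Notation P3 := (prof two_strats).

Definition mk (i j k : 'I_2) : P3 :=
  [ffun p : 'I_3 => (if val p == 0%N then i else if val p == 1%N then j else k) : 'I_2].

Definition unmk (s : P3) : 'I_2 * 'I_2 * 'I_2 :=
  (s (0 : 'I_3), s (1 : 'I_3), s (2 : 'I_3)).

Lemma mkK : cancel unmk (fun t => mk t.1.1 t.1.2 t.2).
Proof.
move=> s; apply/ffunP => -[[|[|[|//]]] Hp]; rewrite ffunE /=;
  congr (s _); exact: val_inj.
Qed.

Lemma unmkK : cancel (fun t => mk t.1.1 t.1.2 t.2) unmk.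
Proof. by move=> [[i j] k]; rewrite /unmk !ffunE. Qed.

Lemma sum_prof (R : realFieldType) (F : P3 -> R) :
  \sum_(s : P3) F s =
  F (mk 0 0 0) + F (mk 0 0 1) + F (mk 0 1 0) + F (mk 0 1 1) +
  F (mk 1 0 0) + F (mk 1 0 1) + F (mk 1 1 0) + F (mk 1 1 1).
Proof.
rewrite (reindex (fun t : 'I_2 * 'I_2 * 'I_2 => mk t.1.1 t.1.2 t.2)) /=; last first.
  by exists unmk => s _; [apply: unmkK | apply: mkK].
rewrite -(pair_big xpredT xpredT (fun a k => F (mk a.1 a.2 k))) /=.
rewrite -(pair_big xpredT xpredT (fun i j => \sum_(k < 2) F (mk i j k))) /=.
rewrite !big_ord_recr !big_ord0 /= !add0r.
have E0 : widen_ord (leqnSn 1) ord_max = 0 :> 'I_2 by apply: val_inj.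
have E1 : (ord_max : 'I_2) = 1 by apply: val_inj.
by rewrite !E0 !E1 !addrA.
Qed.

Lemma dev_mk (p : 'I_3) (b : 'I_(two_strats p)) i j k :
  dev (mk i j k) p b =
  mk (if val p == 0%N then b else i) (if val p == 1%N then b else j)
     (if val p == 2%N then b else k).
Proof.
move: p b => [[|[|[|//]]] Hp] b; apply/ffunP => -[[|[|[|//]]] Hq];
  rewrite !ffunE /=;
  first [ rewrite (bool_irrelevance Hq Hp) dfwith_in //
        | rewrite dfwith_out ?ffunE //].
Qed.

Definition payoff (R : realFieldType) (p i j k : nat) : R :=
  match p, i, j, k with
  | 0, 0, 0, 1 => 2 | 0, 0, 1, 1 => 2 | 0, 1, 1, 1 => 1
  | 1, 0, 0, 1 => 1 | 1, 0, 1, 1 => 2 | 1, 1, 1, 1 => 2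
  | 2, 0, 1, 1 => -1
  | _, _, _, _ => 0
  end.

Definition util (R : realFieldType) (p : 'I_3) (s : P3) : R :=
  payoff R p (s (0 : 'I_3)) (s (1 : 'I_3)) (s (2 : 'I_3)).

Lemma util_mk (R : realFieldType) p i j k : util R p (mk i j k) = payoff R p i j k.
Proof. by rewrite /util !ffunE. Qed.

Definition leaders : {set 'I_3} := [set 0; 1].

Section Constraints.
Variable R : realFieldType.
Implicit Types (P : {set 'I_3}) (y : {ffun P3 -> R}).

Lemma eu0E y : eu (util R) 0 y = 2 * y (mk 0 0 1) + 2 * y (mk 0 1 1) + y (mk 1 1 1).
Proof. rewrite /eu sum_prof !util_mk /=; lra. Qed.

Lemma eu1E y : eu (util R) 1 y = y (mk 0 0 1) + 2 * y (mk 0 1 1) + 2 * y (mk 1 1 1).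
Proof. rewrite /eu sum_prof !util_mk /=; lra. Qed.

Lemma dist_coords y : is_dist y ->
  0 <= y (mk 0 0 0) /\ 0 <= y (mk 0 0 1) /\ 0 <= y (mk 0 1 0) /\ 0 <= y (mk 0 1 1) /\
  0 <= y (mk 1 0 0) /\ 0 <= y (mk 1 0 1) /\ 0 <= y (mk 1 1 0) /\ 0 <= y (mk 1 1 1) /\
  y (mk 0 0 0) + y (mk 0 0 1) + y (mk 0 1 0) + y (mk 0 1 1) +
  y (mk 1 0 0) + y (mk 1 0 1) + y (mk 1 1 0) + y (mk 1 1 1) = 1.
Proof. by move=> [y_ge0 y_sum]; rewrite sum_prof in y_sum; do !split. Qed.

(* The follower, told to play 1, would switch to 0 whenever (0,1,1) has
   positive weight. *)
Lemma follower_incentive P y : (2 : 'I_3) \in P -> CE_P (util R) P y ->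
  y (mk 0 1 1) <= 0.
Proof.
move=> inP [_ CE]; have := CE (2 : 'I_3) inP (1 : 'I_2) (0 : 'I_2) isT.
rewrite big_mkcond sum_prof /= !dev_mk !util_mk !ffunE /=; lra.
Qed.

Lemma leader0_incentive P y : (0 : 'I_3) \in P -> CE_P (util R) P y ->
  0 <= - 2 * y (mk 1 0 1) - y (mk 1 1 1).
Proof.
move=> inP [_ CE]; have := CE (0 : 'I_3) inP (1 : 'I_2) (0 : 'I_2) isT.
rewrite big_mkcond sum_prof /= !dev_mk !util_mk !ffunE /=; lra.
Qed.

Lemma leader1_incentive P y : (1 : 'I_3) \in P -> CE_P (util R) P y ->
  0 <= - y (mk 0 0 1) - 2 * y (mk 1 0 1).
Proof.
move=> inP [_ CE]; have := CE (1 : 'I_3) inP (0 : 'I_2) (1 : 'I_2) isT.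
rewrite big_mkcond sum_prof /= !dev_mk !util_mk !ffunE /=; lra.
Qed.

(* Once leader 0 has committed, leader 1 can only get payoff 1 from (0,0,1),
   which gives leader 0 payoff 2. *)
Lemma leader0_first y : CE_P (util R) (piF leaders [:: 0]) y ->
  1 <= eu (util R) 1 y -> 2 <= eu (util R) 0 y.
Proof.
move=> CE; have [? [? [? [? [? [? [? [? ?]]]]]]]] := dist_coords CE.1.
have := follower_incentive _ CE; have := leader0_incentive _ CE.
rewrite /piF /leaders !inE /= eu0E eu1E => /(_ isT) ? /(_ isT) ?; lra.
Qed.

(* Symmetrically, once leader 1 has committed the outcome is (1,1,1). *)
Lemma leader1_first y : CE_P (util R) (piF leaders [:: 1]) y ->
  1 <= eu (util R) 0 y -> 2 <= eu (util R) 1 y.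
Proof.
move=> CE; have [? [? [? [? [? [? [? [? ?]]]]]]]] := dist_coords CE.1.
have := follower_incentive _ CE; have := leader1_incentive _ CE.
rewrite /piF /leaders !inE /= eu0E eu1E => /(_ isT) ? /(_ isT) ?; lra.
Qed.

(* At the root the leaders' payoffs add up to at most 3, since (0,1,1) is
   ruled out by the follower. *)
Lemma root_payoffs y : CE_P (util R) (piF leaders [::]) y ->
  eu (util R) 0 y + eu (util R) 1 y <= 3.
Proof.
move=> CE; have [? [? [? [? [? [? [? [? ?]]]]]]]] := dist_coords CE.1.
have := follower_incentive _ CE.
rewrite /piF /leaders !inE /= eu0E eu1E => /(_ isT) ?; lra.
Qed.

End Constraints.

Section Witnesses.
Variable R : realFieldType.

Lemma CE_000 : CE_P (util R) setT (point_mass R (mk 0 0 0)).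
Proof.
apply: CE_point_mass => -[[|[|[|//]]] Hp] _ [[|[|//]] Hb];
  rewrite dev_mk !util_mk /=; lra.
Qed.

Lemma CE_001 (P : {set 'I_3}) : (1 : 'I_3) \notin P ->
  CE_P (util R) P (point_mass R (mk 0 0 1)).
Proof.
move=> notP; apply: CE_point_mass => -[[|[|[|//]]] Hp] inP [[|[|//]] Hb];
  rewrite dev_mk !util_mk /=; try lra.
all: by move: notP; rewrite (_ : (1 : 'I_3) = Ordinal Hp) ?inP //; apply: val_inj.
Qed.

Lemma CE_111 (P : {set 'I_3}) : (0 : 'I_3) \notin P ->
  CE_P (util R) P (point_mass R (mk 1 1 1)).
Proof.
move=> notP; apply: CE_point_mass => -[[|[|[|//]]] Hp] inP [[|[|//]] Hb];
  rewrite dev_mk !util_mk /=; try lra.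
all: by move: notP; rewrite (_ : (0 : 'I_3) = Ordinal Hp) ?inP //; apply: val_inj.
Qed.

Lemma leaders_prefer (s1 : P3) : s1 = mk 0 0 1 \/ s1 = mk 1 1 1 ->
  forall p, p \in leaders -> util R p (mk 0 0 0) <= util R p s1.
Proof.
by move=> [->|->] [[|[|[|//]]] Hp] _; rewrite !util_mk /=; lra.
Qed.

Lemma witness0_perfectly_stable :
  perfectly_stable (util R) leaders (two_stage R 0 (mk 0 0 1) (mk 0 0 0)).
Proof.
apply: two_stage_perfectly_stable.
- by apply: CE_001; rewrite /piF /leaders !inE.
- by apply: CE_001; rewrite /piF /leaders !inE.
- exact: CE_000.
- by apply: leaders_prefer; left.
Qed.

Lemma witness1_perfectly_stable :
  perfectly_stable (util R) leaders (two_stage R 1 (mk 1 1 1) (mk 0 0 0)).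
Proof.
apply: two_stage_perfectly_stable.
- by apply: CE_111; rewrite /piF /leaders !inE.
- by apply: CE_111; rewrite /piF /leaders !inE.
- exact: CE_000.
- by apply: leaders_prefer; right.
Qed.

End Witnesses.

Theorem proposition1 (R : rcfType) :
  exists (n : nat) (m : 'I_n -> nat) (u : 'I_n -> prof m -> R) (L : {set 'I_n}),
    (forall p, (0 < m p)%N) /\
    forall x : seq 'I_n -> {ffun prof m -> R}, ~ SCE_PAPE u L x.
Proof.
exists 3%N, two_strats, (util R), leaders; split => // x [[inX stable] optimal].
have ord_root : ordsub leaders [::] by [].
have ord0 : ordsub leaders [:: 0] by rewrite /ordsub /= /leaders !inE.
have ord1 : ordsub leaders [:: 1] by rewrite /ordsub /= /leaders !inE.
have leader0 : (0 : 'I_3) \in leaders by rewrite !inE.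
have leader1 : (1 : 'I_3) \in leaders by rewrite !inE.
have only1 p : p \in leaders -> p \notin [:: 0] -> p = 1.
  by rewrite /leaders !inE => /orP[] /eqP ->.
have only0 p : p \in leaders -> p \notin [:: 1] -> p = 0.
  by rewrite /leaders !inE => /orP[] /eqP ->.
have after0 : 1 <= eu (util R) 1 (x [:: 0]).
  have := pareto_lower_bound (optimal _ ord0) (witness0_perfectly_stable R) leader1 isT only1.
  by rewrite /two_stage /= eu_point_mass util_mk.
have after1 : 1 <= eu (util R) 0 (x [:: 1]).
  have := pareto_lower_bound (optimal _ ord1) (witness1_perfectly_stable R) leader0 isT only0.
  by rewrite /two_stage /= eu_point_mass util_mk.
have := stable _ ord_root _ leader0 isT; have := stable _ ord_root _ leader1 isT.
have := leader0_first (inX _ ord0) after0; have := leader1_first (inX _ ord1) after1.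
have := root_payoffs (inX _ ord_root); lra.
Qed.
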